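(* Let $\alpha\ge1$, and run the Dual Metric Algorithm (described in the context) on a dual-metric-loss instance, using in Phase 1 any $\alpha$-approximate most cohesive clusters, with growth factor $c=\frac{3\alpha+\sqrt{\alpha(\alpha+8)}}{4\alpha}$, any processing order of agents in Phase 2 and any tie-breaking. Then the output clustering is in the $\frac{1}{2}\left(\alpha+\sqrt{\alpha(\alpha+8)}+2\right)$-core with respect to the dual metric loss.
   Context: Instance: finite nonempty set $\mathcal{N}$ of $n$ agents, finite nonempty set $\mathcal{M}$ of feasible centers, positive integer $k$, pseudometric $d^m$ on $\mathcal{N}$, pseudometric $d^c$ on $\mathcal{N}\cup\mathcal{M}$. Dual metric loss: $\ell_i(C,x)=\max_{j\in C}d^m(i,j)+d^c(i,x)$ for $i\in C\subseteq\mathcal{N}$, $x\in\mathcal{M}$. A clustering is $\mathcal{X}=\{(C_1,x_1),\dots,(C_k,x_k)\}$ with $C_t$ pairwise disjoint (some possibly empty), union $\mathcal{N}$, $x_t\in\mathcal{M}$; $\ell_i(\mathcal{X})=\ell_i(C_t,x_t)$ where $i\in C_t$. For $\beta\ge1$, $\mathcal{X}$ is in the $\beta$-core if there is no $S\subseteq\mathcal{N}$ with $|S|\ge n/k$ and $y\in\mathcal{M}$ with $\beta\,\ell_i(S,y)<\ell_i(\mathcal{X})$ for all $i\in S$. $\alpha$-approximate most cohesive cluster ($\alpha$-MCC) from an agent set $A\subseteq\mathcal{N}$ (threshold $n/k$): a pair $(C,x)$ with $C\subseteq A$, $|C|\ge\min(|A|,n/k)$, $x\in\mathcal{M}$, such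 that $\max_{i\in C}\ell_i(C,x)\le\alpha\max_{i\in S}\ell_i(S,y)$ for every $S\subseteq A$ with $|S|\ge\min(|A|,n/k)$ and every $y\in\mathcal{M}$. Dual Metric Algorithm (parameters $c\ge1$, $\alpha$). Phase 1: set $A\leftarrow\mathcal{N}$, $t\leftarrow1$; while $A\ne\emptyset$: choose an $\alpha$-MCC $(\hat C_t,x_t)$ from $A$, set $r_t=\max_{i\in\hat C_t}\ell_i(\hat C_t,x_t)$, $A\leftarrow A\setminus\hat C_t$, $t\leftarrow t+1$. Let $T$ be the set of indices created (at most $k$), and for $i\in\mathcal{N}$ let $\hat t(i)$ be the index with $i\in\hat C_{\hat t(i)}$. Phase 2: set $C_t\leftarrow\hat C_t$ for $t\in T$; for each agent $i$ in turn: let $t=\hat t(i)$; let $V_i=\{t'\in T:\ d^c(j,x_{t'})+d^m(j,i)\le c\,r_{t'}\text{ for all } j\in\hat C_{t'}\}$; define $\Phi(i,t')=d^c(i,x_{t'})+c\,r_{t'}+\min_{j\in\hat C_{t'}}\big(d^m(i,j)-d^c(j,x_{t'})\big)$; pick $t^*\in\arg\min_{t'\in V_i}\Phi(i,t')$; if $\Phi(i,t^* )<c\,r_t$, remove $i$ from $C_t$ and add it to $C_{t^*}$. Output $\{(C_t,x_t):t\in T\}$, padded with empty clusters (arbitrary centers) to $k$ clusters. *)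

From HB Require Import structures.
From mathcomp Require Import all_boot all_order all_algebra.
Set Implicit Arguments. Unset Strict Implicit. Unset Printing Implicit Defensive.
Import Order.TTheory GRing.Theory Num.Theory.
Local Open Scope ring_scope.

Definition is_pseudometric (R : numDomainType) (X : Type) (d : X -> X -> R) : Prop :=
  (forall x, d x x = 0) /\ (forall x y, d x y = d y x) /\
  (forall x y z, d x z <= d x y + d y z).

Definition minR (R : realDomainType) (l : seq R) : R :=
  match l with [::] => 0 | a :: l' => foldr Num.min a l' end.

Section DualMetric.
Variables (R : rcfType) (N M : finType) (k : nat).
(* dm = d^m on agents; dc = d^c on N ∪ M, represented as the sum type N + M *)
Variables (dm : N -> N -> R) (dc : N + M -> N + M -> R).

Definition thr : R := #|N|%:R / k%:R.

Definition loss (C : {set N}) (x : M) (i : N) : R :=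
  \big[Num.max/0]_(j in C) dm i j + dc (inl i) (inr x).

Definition cost (C : {set N}) (x : M) : R :=
  \big[Num.max/0]_(i in C) loss C x i.

Definition is_MCC (alpha : R) (A : {set N}) (C : {set N}) (x : M) : Prop :=
  [/\ C \subset A, Num.min (#|A|%:R) thr <= #|C|%:R &
      forall (S : {set N}) (y : M), S \subset A -> Num.min (#|A|%:R) thr <= #|S|%:R ->
        cost C x <= alpha * cost S y].

(* Phase 1: s lists the pairs (hat C_t, x_t) in order of creation, starting from A *)
Fixpoint phase1_run (alpha : R) (A : {set N}) (s : seq ({set N} * M)) : Prop :=
  match s with
  | [::] => A = set0
  | p :: s' => A != set0 /\ is_MCC alpha A p.1 p.2 /\ phase1_run alpha (A :\: p.1) s'
  end.

Section Phase2.
Variables (c : R) (s : seq ({set N} * M)).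
Local Notation T := 'I_(size s).

Definition Chat (t : T) : {set N} := (tnth (in_tuple s) t).1.
Definition xc (t : T) : M := (tnth (in_tuple s) t).2.
Definition rad (t : T) : R := cost (Chat t) (xc t).

Definition Vset (i : N) : {set T} :=
  [set t' : T | [forall j in Chat t', dc (inl j) (inr (xc t')) + dm j i <= c * rad t']].

Definition Phi (i : N) (t' : T) : R :=
  dc (inl i) (inr (xc t')) + c * rad t' +
  minR [seq dm i j - dc (inl j) (inr (xc t')) | j <- enum (Chat t')].

(* pick : N -> T is a tie-breaking rule choosing an argmin of Phi(i,.) over V_i *)
Definition valid_pick (pick : N -> T) : Prop :=
  forall i, Vset i != set0 ->
    pick i \in Vset i /\ (forall t', t' \in Vset i -> Phi i (pick i) <= Phi i t').

(* processing of agent i in Phase 2; g is the current assignment agent -> cluster index;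
   that = hat t *)
Definition step2 (that pick : N -> T) (g : N -> T) (i : N) : N -> T :=
  if (Vset i != set0) && (Phi i (pick i) < c * rad (that i))
  then (fun j => if j == i then pick i else g j) else g.

Definition final_assign (that pick : N -> T) (ord : seq N) : N -> T :=
  foldl (step2 that pick) that ord.

Definition out_cluster (that pick : N -> T) (ord : seq N) (t : T) : {set N} :=
  [set i | final_assign that pick ord i == t].

Definition out_loss (that pick : N -> T) (ord : seq N) (i : N) : R :=
  let t := final_assign that pick ord i in
  loss (out_cluster that pick ord t) (xc t) i.
End Phase2.

Definition in_core (beta : R) (lossX : N -> R) : Prop :=
  ~ exists (S : {set N}) (y : M),
      thr <= #|S|%:R /\ forall i, i \in S -> beta * loss S y i < lossX i.
End DualMetric.

From Pilot Require Import Defs.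
From HB Require Import structures.
From mathcomp Require Import all_boot all_order all_algebra.
From mathcomp Require Import lra ring.
Import Order.TTheory GRing.Theory Num.Theory.
Set Implicit Arguments.
Unset Strict Implicit.
Unset Printing Implicit Defensive.
Local Open Scope ring_scope.

(* Write b for the core factor.  Let S block with center y, let i0 be the
   member of S whose Phase-1 cluster t was formed first, and let i* be a member
   of S of maximal loss L = cost S y.  When t was formed all of S was still
   available, so rad t <= alpha L.  Agent i0 ends with loss at most c rad t, so
   blocking gives b a < c rad t, where a is the loss of i0 in S.  Hence i* is
   close enough to t for t to lie in V_i*, and i* ends with loss at most
   Phi(i*, t) <= L + a + c rad t, so blocking also gives b L < L + a + c rad t.
   For the chosen c and b these two inequalities contradict rad t <= alpha L. *)

Lemma pseudometric_ge0 (R : realFieldType) (X : Type) (d : X -> X -> R) :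
  is_pseudometric d -> forall x y, 0 <= d x y.
Proof. by move=> [d0 [dS dT]] x y; have := dT x y x; rewrite d0 (dS y x); lra. Qed.

Lemma foldr_min_le (R : realDomainType) (a : R) l z :
  z \in a :: l -> foldr Num.min a l <= z.
Proof.
elim: l => [|x l IH] /=; first by rewrite inE => /eqP ->.
rewrite !inE ge_min => /or3P [/eqP za|/eqP ->|zl].
- by rewrite IH ?orbT // inE za eqxx.
- by rewrite lexx.
- by rewrite IH ?orbT // inE zl orbT.
Qed.

Lemma foldr_min_mem (R : realDomainType) (a : R) l :
  foldr Num.min a l \in a :: l.
Proof.
elim: l => [|x l IH] /=; first by rewrite inE.
case: leP => _; first by rewrite !inE eqxx orbT.
by move: IH; rewrite !inE => /orP [->|->]; rewrite ?orbT.
Qed.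

Lemma minR_le (R : realDomainType) (l : seq R) z : z \in l -> minR l <= z.
Proof. by case: l => [//|a l]; exact: foldr_min_le. Qed.

Lemma minR_mem (R : realDomainType) (l : seq R) : l != [::] -> minR l \in l.
Proof. by case: l => [//|a l] _; exact: foldr_min_mem. Qed.

(* c = b / (b - 1), and b - 1 is the positive root of u^2 = alpha (u + 2). *)
Lemma dual_metric_factors (R : rcfType) (alpha c b : R) : 1 <= alpha ->
  c = (3 * alpha + Num.sqrt (alpha * (alpha + 8))) / (4 * alpha) ->
  b = (alpha + Num.sqrt (alpha * (alpha + 8)) + 2) / 2 ->
  [/\ b * (c - 1) = c, c * alpha * (1 + b) = b * (b - 1), 1 <= c & 0 < b].
Proof.
move=> alpha_ge1; set q := Num.sqrt _ => cE bE.
have q_ge0 : 0 <= q by rewrite sqrtr_ge0.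
have qq : q * q = alpha * alpha + 8 * alpha.
  by rewrite -expr2 sqr_sqrtr; [ring | nra].
have {}cE : 4 * alpha * c = 3 * alpha + q by rewrite cE mulrC divfK //; lra.
have {}bE : 2 * b = alpha + q + 2 by rewrite bE mulrC divfK //; lra.
have alpha_le_q : alpha <= q by nra.
split; [nra | nra | | lra].
by rewrite -(ler_pM2l (_ : 0 < 4 * alpha)) ?mulr1; lra.
Qed.

Lemma deviations_incompatible (R : realFieldType) (alpha b c a r L : R) :
  0 < b -> 1 <= c -> c * alpha * (1 + b) = b * (b - 1) ->
  b * a < c * r -> b * L < L + a + c * r -> r <= alpha * L -> False.
Proof.
move=> b_gt0 c_ge1 cbE dev_a dev_L r_le.
have : b * (b * L) < b * (L + a + c * r) by rewrite ltr_pM2l.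
have : c * (1 + b) * r <= c * (1 + b) * (alpha * L) by apply: ler_wpM2l; nra.
have : c * alpha * (1 + b) * L = b * (b - 1) * L by rewrite cbE.
nra.
Qed.

Section DualMetricAlgorithm.
Variables (R : rcfType) (N M : finType) (k : nat).
Variables (dm : N -> N -> R) (dc : N + M -> N + M -> R).

Local Notation loss := (Defs.loss dm dc).
Local Notation cost := (Defs.cost dm dc).
Local Notation thr := (Defs.thr R N k).
Hypotheses (dm_pm : is_pseudometric dm) (dc_pm : is_pseudometric dc).

Lemma loss_ge (C : {set N}) x i j :
  j \in C -> dm i j + dc (inl i) (inr x) <= loss C x i.
Proof. by move=> jC; rewrite lerD2r; apply: le_bigmax_cond. Qed.

Lemma loss_le_cost (C : {set N}) x i : i \in C -> loss C x i <= cost C x.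
Proof. exact: le_bigmax_cond. Qed.

Lemma cost_ge0 (C : {set N}) x : 0 <= cost C x.
Proof. exact: bigmax_ge_id. Qed.

Lemma cost_attained (C : {set N}) x : C != set0 ->
  exists2 i, i \in C & cost C x = loss C x i.
Proof.
case/set0Pn => i0 i0C.
have [|i iC costE] := @eq_bigmax _ _ _ 0 _ _ (loss C x) i0C; last by exists i.
by move=> i _; rewrite addr_ge0 ?bigmax_ge_id ?pseudometric_ge0.
Qed.

Section Phase1.
Variable alpha : R.
Local Notation run := (phase1_run k dm dc alpha).

Lemma phase1_sub A s d t : run A s -> (t < size s)%N -> (nth d s t).1 \subset A.
Proof.
elim: s A t => [//|p s IH] A [|t] /= [_ [[pA _ _] hrun]] ht //.
exact: subset_trans (IH _ _ hrun ht) (subsetDl _ _).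
Qed.

Lemma phase1_disjoint A s d t t' i : run A s -> (t' < t < size s)%N ->
  i \in (nth d s t).1 -> i \notin (nth d s t').1.
Proof.
elim: s A t t' => [|p s IH] A [|t] [|t'] //=; rewrite ?ltn0 ?andbF //.
- move=> [_ [_ hrun]] ht hi.
  by have /setDP [] := subsetP (phase1_sub d hrun ht) i hi.
- by move=> [_ [_ hrun]] ht; apply: IH hrun ht.
Qed.

Lemma phase1_neq0 A s d t : 0 < thr -> run A s -> (t < size s)%N ->
  (nth d s t).1 != set0.
Proof.
move=> thr_gt0; elim: s A t => [//|p s IH] A [|t] /= [A0 [[_ pC _] hrun]] ht.
- rewrite -card_gt0 -(ltr0n R); apply: lt_le_trans pC.
  by rewrite lt_min thr_gt0 ltr0n card_gt0 A0.
- exact: IH hrun ht.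
Qed.

Lemma phase1_cost_le A s d t (S : {set N}) y : run A s -> (t < size s)%N ->
  S \subset A -> thr <= #|S|%:R ->
  (forall i t', i \in S -> (t' < t)%N -> i \notin (nth d s t').1) ->
  cost (nth d s t).1 (nth d s t).2 <= alpha * cost S y.
Proof.
elim: s A t => [//|p s IH] A [|t] /= [_ [[_ _ pMCC] hrun]] ht SA hS Sfree.
- by apply: pMCC; rewrite // ge_min hS orbT.
- apply: IH hrun ht _ hS (fun i t' iS => Sfree i t'.+1 iS).
  by apply/subsetP => i iS; rewrite inE (subsetP SA) // (Sfree i 0%N).
Qed.

End Phase1.

Section Phase2.
Variables (c : R) (s : seq ({set N} * M)) (that pick : N -> 'I_(size s)).
Local Notation T := 'I_(size s).
Local Notation Chat := (Chat (s := s)).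
Local Notation xc := (xc (s := s)).
Local Notation rad := (Defs.rad dm dc (s := s)).
Local Notation V := (Vset dm dc c s).
Local Notation Phi := (Phi dm dc c).

Lemma Chat_nth d (t : T) : Chat t = (nth d s t).1.
Proof. by rewrite /Defs.Chat (tnth_nth d). Qed.

Lemma xc_nth d (t : T) : xc t = (nth d s t).2.
Proof. by rewrite /Defs.xc (tnth_nth d). Qed.

Lemma rad_ge0 (t : T) : 0 <= rad t.
Proof. exact: cost_ge0. Qed.

Lemma Chat_within_rad (t : T) l j : l \in Chat t -> j \in Chat t ->
  dc (inl l) (inr (xc t)) + dm l j <= rad t.
Proof.
move=> lC jC; rewrite addrC /Defs.rad.
by apply: le_trans (loss_le_cost _ lC); apply: loss_ge.
Qed.

Definition moves (i : N) : bool :=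
  (V i != set0) && (Phi i (pick i) < c * rad (that i)).

Lemma foldl_step2E g (ord : seq N) i :
  foldl (step2 dm dc c that pick) g ord i =
  if (i \in ord) && moves i then pick i else g i.
Proof.
elim: ord g => [//|j ord IH] g /=; rewrite IH inE /step2 -/(moves j).
case: (eqVneq i j) => [->|/negbTE ij] /=; case: (moves j);
  by rewrite ?eqxx ?ij ?andbT ?andbF ?if_same.
Qed.

Lemma Phi_le i (t : T) l : l \in Chat t -> Phi i t <=
  dc (inl i) (inr (xc t)) + c * rad t + (dm i l - dc (inl l) (inr (xc t))).
Proof. by move=> lC; rewrite lerD2l; apply/minR_le/map_f; rewrite mem_enum. Qed.

Lemma Phi_attained i (t : T) : Chat t != set0 -> exists2 l, l \in Chat t &
  Phi i t = dc (inl i) (inr (xc t)) + c * rad t + (dm i l - dc (inl l) (inr (xc t))).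
Proof.
move=> Ct0; rewrite /Defs.Phi.
set l := map _ _; have : l != [::].
  by rewrite -size_eq0 size_map -cardE -lt0n card_gt0.
by move/minR_mem/mapP => [j]; rewrite mem_enum => jC ->; exists j.
Qed.

Hypotheses (c_ge1 : 1 <= c) (Chat_neq0 : forall t, Chat t != set0).
Hypothesis that_mem : forall i, i \in Chat (that i).
Hypothesis pick_valid : valid_pick dm dc c pick.
Variable ord : seq N.
Hypothesis ord_perm : perm_eq ord (enum N).
Local Notation F := (final_assign dm dc c that pick ord).

Lemma final_assignE i : F i = if moves i then pick i else that i.
Proof. by rewrite /final_assign foldl_step2E (perm_mem ord_perm) mem_enum. Qed.

Lemma final_member_within j l : l \in Chat (F j) ->
  dc (inl l) (inr (xc (F j))) + dm l j <= c * rad (F j).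
Proof.
rewrite final_assignE /moves; case: ifP => [/andP [Vj _]|_] lC.
- by have [/[!inE] /forall_inP -> //] := pick_valid Vj.
- apply: le_trans (Chat_within_rad lC (that_mem j)) _.
  by rewrite ler_peMl ?rad_ge0.
Qed.

Lemma out_loss_le i : out_loss dm dc c that pick ord i <=
  if moves i then Phi i (pick i) else c * rad (that i).
Proof.
have [dm0 [_ dm_tri]] := dm_pm.
set B := (if moves i then _ else _).
suff close j : F j = F i -> dm i j + dc (inl i) (inr (xc (F i))) <= B.
  rewrite /out_loss /Defs.loss -lerBrDr; apply: bigmax_le => [|j].
    by rewrite lerBrDr -(dm0 i) close.
  by rewrite inE => /eqP/close; rewrite lerBrDr.
rewrite /B (final_assignE i); case: (moves i) => Fji.
- have [l lC ->] := Phi_attained i (Chat_neq0 (pick i)).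
  have := @final_member_within j l; rewrite Fji => /(_ lC).
  have := dm_tri i l j; lra.
- by rewrite addrC; have := @final_member_within j i; rewrite Fji; apply.
Qed.

Lemma out_loss_le_rad i : out_loss dm dc c that pick ord i <= c * rad (that i).
Proof.
have := out_loss_le i; rewrite /moves.
case: ifP => // /andP [_ /ltW Phi_le_rad].
by move/le_trans; apply.
Qed.

Lemma out_loss_le_Phi i t :
  t \in V i -> out_loss dm dc c that pick ord i <= Phi i t.
Proof.
move=> tV; have Vi : V i != set0 by apply/set0Pn; exists t.
have [_ pick_min] := pick_valid Vi.
apply: le_trans (out_loss_le i) _; rewrite /moves Vi /=.
case: ltP => [_|rad_le_Phi]; first exact: pick_min.
exact: le_trans rad_le_Phi (pick_min t tV).
Qed.

Lemma Vset_near i0 i t :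
  i0 \in Chat t -> dm i0 i <= (c - 1) * rad t -> t \in V i.
Proof.
have [_ [_ dm_tri]] := dm_pm.
move=> i0C near; rewrite inE; apply/forall_inP => j jC.
have := Chat_within_rad jC i0C; have := dm_tri j i0 i; lra.
Qed.

Section Stability.
Variables (alpha b : R).
Hypothesis run : phase1_run k dm dc alpha [set: N] s.
Hypotheses (bcE : b * (c - 1) = c) (cbE : c * alpha * (1 + b) = b * (b - 1)).
Hypothesis b_gt0 : 0 < b.

(* The cluster t was an alpha-MCC chosen while all of S was still available. *)
Lemma rad_le_alpha_cost (S : {set N}) y (t : T) : thr <= #|S|%:R ->
  (forall i, i \in S -> t <= that i)%N -> rad t <= alpha * cost S y.
Proof.
move=> S_large S_later; pose d := (set0 : {set N}, xc t).
rewrite /Defs.rad (Chat_nth d) (xc_nth d).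
apply: phase1_cost_le run (ltn_ord t) (subsetT S) S_large _ => i t' iS t't.
have := that_mem i; rewrite (Chat_nth d) => /phase1_disjoint.
apply; first exact: run.
by rewrite ltn_ord (leq_trans t't) ?S_later.
Qed.

Lemma dual_metric_algorithm_in_core : 0 < thr ->
  in_core k dm dc b (out_loss dm dc c that pick ord).
Proof.
have [dm0 _] := dm_pm; have [_ [dcC dc_tri]] := dc_pm.
move=> thr_gt0 [S [y [S_large S_blocks]]].
have /card_gt0P [i1 i1S] : (0 < #|S|)%N.
  by rewrite -(ltr0n R) (lt_le_trans thr_gt0).
case: (arg_minnP (fun i => val (that i)) i1S) => i0 i0S i0_first.
set t := that i0; set a := loss S y i0.
have [|istar istarS costE] := cost_attained y (_ : S != set0).
  by apply/set0Pn; exists i0.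
set L := loss S y istar in costE.
have r_le : rad t <= alpha * L by rewrite -costE rad_le_alpha_cost.
have dev_a : b * a < c * rad t.
  exact: lt_le_trans (S_blocks i0 i0S) (out_loss_le_rad i0).
have a_le : a <= (c - 1) * rad t.
  by rewrite -bcE -mulrA ltr_pM2l // in dev_a; apply: ltW.
have tV : t \in V istar.
  apply: Vset_near (that_mem i0) _; apply: le_trans a_le.
  have := loss_ge y i0 istarS; rewrite -/a.
  by have := pseudometric_ge0 dc_pm (inl i0) (inr y); lra.
have dev_L : b * L < L + a + c * rad t.
  apply: lt_le_trans (S_blocks istar istarS) _.
  apply: le_trans (out_loss_le_Phi tV) _.
  apply: le_trans (Phi_le istar (that_mem i0)) _.
  have := loss_ge y istar i0S; have := loss_ge y i0 i0S; rewrite dm0 -/a -/L.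
  have := dc_tri (inl istar) (inr y) (inr (xc t)).
  have := dc_tri (inr y) (inl i0) (inr (xc t)).
  have := dcC (inr y) (inl i0); rewrite -/t; lra.
exact: deviations_incompatible b_gt0 c_ge1 cbE dev_a dev_L r_le.
Qed.

End Stability.
End Phase2.
End DualMetricAlgorithm.

Theorem mainTheorem5 (R : rcfType) (N M : finType) (k : nat)
  (dm : N -> N -> R) (dc : N + M -> N + M -> R) (alpha : R)
  (s : seq ({set N} * M)) (that pick : N -> 'I_(size s)) (ord : seq N) :
  (0 < k)%N -> (0 < #|N|)%N -> (0 < #|M|)%N ->
  is_pseudometric dm -> is_pseudometric dc -> 1 <= alpha ->
  phase1_run k dm dc alpha [set: N] s ->
  (forall i, i \in Chat (s := s) (that i)) ->
  let c := (3 * alpha + Num.sqrt (alpha * (alpha + 8))) / (4 * alpha) in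
  valid_pick dm dc c pick ->
  perm_eq ord (enum N) ->
  in_core k dm dc ((alpha + Num.sqrt (alpha * (alpha + 8)) + 2) / 2)
    (out_loss dm dc c that pick ord).
Proof.
move=> k_gt0 N_gt0 _ dm_pm dc_pm alpha_ge1 run that_mem c pick_valid ord_perm.
have [bcE cbE c_ge1 b_gt0] := dual_metric_factors alpha_ge1 erefl erefl.
have thr_gt0 : 0 < thr R N k by rewrite divr_gt0 ?ltr0n.
have Chat_neq0 (t : 'I_(size s)) : Chat t != set0.
  by rewrite (Chat_nth (set0, xc t)) (phase1_neq0 _ thr_gt0 run (ltn_ord t)).
exact: (dual_metric_algorithm_in_core dm_pm dc_pm c_ge1 Chat_neq0 that_mem
  pick_valid ord_perm run bcE cbE b_gt0 thr_gt0).
Qed.
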